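(* Let $(S_n)_{n\ge0}$ be defined by $S_0=3$, $S_1=1$, $S_2=3$ and $S_{n+1}=S_n+S_{n-1}+S_{n-2}$ for $n\ge 2$. Let $\alpha,\beta,\gamma$ be the roots of $x^3-x^2-x-1=0$ and $C_n=\alpha^n\beta^n+\alpha^n\gamma^n+\beta^n\gamma^n$ for $n\ge0$. Then for all $n\ge 2$, $$S_nS_{n-1}=S_{2n-1}+C_{n-1}-C_{n-2}.$$
   Context: $S_n$ is the generalized Lucas (generalized Tribonacci) sequence. *)

From HB Require Import structures.
From mathcomp Require Import all_boot all_order all_algebra.
Set Implicit Arguments. Unset Strict Implicit. Unset Printing Implicit Defensive.
Import Order.TTheory GRing.Theory Num.Theory.
Local Open Scope ring_scope.

Fixpoint S_seq (n : nat) : nat :=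
  match n with
  | 0 => 3
  | n1.+1 =>
    match n1 with
    | 0 => 1
    | n2.+1 =>
      match n2 with
      | 0 => 3
      | n3.+1 => (S_seq n1 + S_seq n2 + S_seq n3)%N
      end
    end
  end.

Definition C_seq (R : comNzRingType) (a b c : R) (n : nat) : R :=
  a ^+ n * b ^+ n + a ^+ n * c ^+ n + b ^+ n * c ^+ n.

From HB Require Import structures.
From mathcomp Require Import all_boot all_order all_algebra.
From mathcomp Require Import ring zify.
Set Implicit Arguments. Unset Strict Implicit. Unset Printing Implicit Defensive.
Import Order.TTheory GRing.Theory Num.Theory.
Local Open Scope ring_scope.

(* S_n is the power sum a^n + b^n + c^n of the roots: both sequences satisfy the
   tribonacci recurrence and agree at n = 0, 1, 2 by Vieta's formulas
   a + b + c = 1, ab + bc + ca = -1, abc = 1.  Expanding the product of two power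
   sums, the cross terms x^(m+2) y^(m+1) with x <> y group by pairs {x, y} into
   (xy)^(m+1) (x + y) = (xy)^(m+1) (1 - z), and (xy)^(m+1) z = abc (xy)^m. *)

Definition psum3 (R : comNzRingType) (a b c : R) (k : nat) : R :=
  a ^+ k + b ^+ k + c ^+ k.

Lemma psum3_mul (R : comNzRingType) (a b c : R) (m : nat) :
  psum3 a b c m.+2 * psum3 a b c m.+1
    = psum3 a b c (m.+2 + m.+1) + (a + b + c) * C_seq a b c m.+1
      - a * b * c * C_seq a b c m.
Proof. rewrite /psum3 /C_seq !exprD !exprS; ring. Qed.

Lemma eq_tribonacci (V : nmodType) (u v : nat -> V) :
  (forall k, u k.+3 = u k.+2 + u k.+1 + u k) ->
  (forall k, v k.+3 = v k.+2 + v k.+1 + v k) ->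
  u 0%N = v 0%N -> u 1%N = v 1%N -> u 2%N = v 2%N -> u =1 v.
Proof.
move=> uS vS u0 u1 u2 k.
suff: [/\ u k = v k, u k.+1 = v k.+1 & u k.+2 = v k.+2] by case.
elim: k => [|k [IH0 IH1 IH2]] //.
by split=> //; rewrite uS vS IH0 IH1 IH2.
Qed.

Section TribonacciRoots.

Variables (R : comNzRingType) (a b c : R).
Hypothesis habc : 'X^3 - 'X^2 - 'X - 1 = ('X - a%:P) * ('X - b%:P) * ('X - c%:P).

Lemma tribonacci_vieta :
  [/\ a + b + c = 1, a * b + b * c + c * a = -1 & a * b * c = 1].
Proof.
have expand : ('X - a%:P) * ('X - b%:P) * ('X - c%:P) = 'X^3 - (a + b + c) *: 'X^2
    + (a * b + b * c + c * a) *: 'X - (a * b * c)%:P :> {poly R}.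
  by rewrite -!mul_polyC !polyCD !polyCM; ring.
have coef i := congr1 (coefp i) (etrans habc expand).
move: (coef 2%N) (coef 1%N) (coef 0%N).
rewrite /= !(coefB, coefD, coefZ, coefXn, coefX, coefC, coef1) /=.
rewrite !(mulr0, mulr1, subr0, sub0r, addr0, add0r, oppr0).
by move=> /oppr_inj <- <- /oppr_inj <-.
Qed.

Lemma tribonacci_root x : x \in [:: a; b; c] -> x ^+ 3 = x ^+ 2 + x + 1.
Proof.
have root_x : x \in [:: a; b; c] -> ('X^3 - 'X^2 - 'X - 1).[x] = 0.
  rewrite habc => /predU1P[->|/predU1P[->|/predU1P[->|//]]];
    by rewrite !hornerE subrr ?(mulr0, mul0r).
move=> /root_x; rewrite !hornerE => cubic0.
by apply/subr0_eq; rewrite -cubic0; ring.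
Qed.

Lemma psum3_tribonacci k :
  psum3 a b c k.+3 = psum3 a b c k.+2 + psum3 a b c k.+1 + psum3 a b c k.
Proof.
have powS x : x \in [:: a; b; c] -> x ^+ k.+3 = x ^+ k.+2 + x ^+ k.+1 + x ^+ k.
  by move=> /tribonacci_root cube; rewrite -addn3 exprD cube !exprS; ring.
by rewrite /psum3 !powS ?(mem_head, in_cons, eqxx, orbT) //; ring.
Qed.

Lemma S_seq_psum3 k : (S_seq k)%:R = psum3 a b c k.
Proof.
have [sum1 sum2 _] := tribonacci_vieta.
apply: (eq_tribonacci (u := fun k => (S_seq k)%:R)) => {k} [k|k|||].
- by rewrite -!natrD.
- exact: psum3_tribonacci.
- by rewrite /psum3 /= !expr0; ring.
- by rewrite /psum3 /= !expr1 sum1.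
- have -> : psum3 a b c 2 = (a + b + c) ^+ 2 - 2 * (a * b + b * c + c * a).
    by rewrite /psum3; ring.
  by rewrite /= sum1 sum2; ring.
Qed.

End TribonacciRoots.

Theorem mainTheorem4 (R : numClosedFieldType) (a b c : R)
  (habc : 'X^3 - 'X^2 - 'X - 1 = ('X - a%:P) * ('X - b%:P) * ('X - c%:P))
  (n : nat) (hn : (2 <= n)%N) :
  ((S_seq n * S_seq n.-1)%N)%:R
    = (S_seq (2 * n - 1))%:R + C_seq a b c (n - 1) - C_seq a b c (n - 2).
Proof.
case: n hn => [|[|m]] // _.
have [sum1 _ prod1] := tribonacci_vieta habc.
have -> : (2 * m.+2 - 1 = m.+2 + m.+1)%N by lia.
by rewrite subn1 subn2 natrM !(S_seq_psum3 habc) psum3_mul sum1 prod1 !mul1r.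
Qed.
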